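(* Let $E$ be a Hausdorff locally convex topological vector space, $\Omega$ a nonempty open subset of $E$, $F$ a nonempty subset of $E$ and $f:\Omega\to\mathbb{R}$ a function. Assume that $\hat{x}\in\Omega\cap F$ is an optimal solution of the problem of maximizing $f(x)$ subject to $x\in\Omega$, $x\in F$ (i.e. $f(\hat x)\ge f(x)$ for all $x\in\Omega\cap F$), that $f$ is Gateaux differentiable at $\hat{x}$, and that $F$ is weak-admissible at $\hat{x}$ and determined by a family $C$. Then either $\hat{x}\in\operatorname{int}(F)$ and therefore $d_G f(\hat{x})=0$, or, if $\hat{x}\in F\setminus\operatorname{int}(F)$, we have $0\in[d_G f(\hat{x}),\mathcal{T}_{C}(\hat{x})]$; that is, there exist $(\lambda^*,\beta^* )\in\mathbb{R}^+\times\mathbb{R}^+$ and $x^*\in\mathcal{T}_{C}(\hat{x})$ such that (i) $(\lambda^*,\beta^* )\neq(0,0)$ and (ii) $\lambda^* d_G f(\hat{x})+\beta^* x^*=0$. If moreover $0\notin\mathcal{T}_{C}(\hat{x})$ (in particular if $E$ is a normed space and $F$ is admissible at $\hat{x}$, determined by $C$), then one can choose $\lambda^*=1$.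
   Context: $E^*$ is the topological dual of $E$, equipped with the weak-star ($w^*$) topology; $\overline{\operatorname{conv}}^{w^*}(B)$ is the $w^*$-closed convex hull of $B\subset E^*$. A map $g$ from $E$ (or an open subset) into a normed space $Y$ is Gateaux differentiable at $x$ if there is a continuous linear map $d_Gg(x):E\to Y$ with $\lim_{t\searrow 0}\|(g(x+tv)-g(x)-t\,d_Gg(x)(v))/t\|=0$ for every $v\in E$. For a family $C$ of functions $\phi:E\to\mathbb{R}$, $[C]^\times:=\{x\in E:\phi(x)\ge 0\ \forall\phi\in C\}$. $C$ is equi-Gateaux differentiable at $x$ if each $\phi\in C$ is Gateaux differentiable at $x$ and for every $v\in E$, $\lim_{t\searrow0}\sup_{\phi\in C}|(\phi(x+tv)-\phi(x)-t\langle d_G\phi(x),v\rangle)/t|=0$. $C$ is equi-lower semicontinuous at $x$ if for every $\varepsilon>0$ there is an open neighbourhood $O$ of $x$ with $\phi(y)-\phi(x)>-\varepsilon$ for all $y\in O$ and all $\phi\in C$. If $E$ is normed, $C$ is $r$-equi-Lipschitz at $x$ ($r\ge0$) if there is a ball centered at $x$ on which every $\phi\in C$ is $r$-Lipschitz. A set $F\subset E$ is weak-admissible at $\hat x\in F$, determined by $C$, if $C$ is a nonempty family of functions $E\to\mathbb{R}$ with: (a) $F=[C]^\times$; (b) $C$ is equi-Gateaux differentiable at $\hat x$; (c) $\{\phi\in C:\phi(\hat x)\ne0\}$ is empty or equi-lower semicontinuous at $\hat x$; (d) $\overline{\operatorname{conv}}^{w^*}\{d_G\phi(\hat x):\phi\in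 C\}$ is $w^*$-compact in $E^*$. If $E$ is normed, $F$ is admissible at $\hat x\in F$, determined by $C$, if $C$ is a nonempty family of functions $E\to\mathbb{R}$ with: (a) $F=[C]^\times$; (b) $C$ is equi-Gateaux differentiable and $r$-equi-Lipschitz at $\hat x$ for some $r\ge0$; (c) $0\notin\overline{\operatorname{conv}}^{w^*}\{d_G\phi(\hat x):\phi\in C\}$. $\mathcal{T}_C(\hat x):=\bigcap_{n\ge1}\overline{\operatorname{conv}}^{w^*}\{d_G\phi(\hat x):\phi\in C,\ \phi(\hat x)\in[0,1/n]\}\subset E^*$. For a point $w$ and a set $K$, $[w,K]:=\{\lambda w+(1-\lambda)x:\lambda\in[0,1],x\in K\}$. *)

From HB Require Import structures.
From mathcomp Require Import all_boot all_order all_algebra.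
From mathcomp Require Import all_classical all_reals all_analysis.
Set Implicit Arguments. Unset Strict Implicit. Unset Printing Implicit Defensive.
Import Order.TTheory GRing.Theory Num.Theory.
Import numFieldNormedType.Exports.
Local Open Scope classical_set_scope.
Local Open Scope ring_scope.

Section Defs.
Context {R : realType} {E : tvsType R}.

Definition is_dual (l : E -> R) : Prop :=
  (forall (a : R) (u v : E), l (a *: u + v) = a * l u + l v) /\ continuous l.

Definition gateaux_at (g : E -> R) (x : E) (L : E -> R) : Prop :=
  is_dual L /\
  forall v : E, (fun t : R => (g (x + t *: v) - g x - t * L v) / t) @ 0^'+ --> 0.

Definition gateaux_differentiable (g : E -> R) (x : E) : Prop :=
  exists L, gateaux_at g x L.

Definition nonneg_set (C : set (E -> R)) : set E :=
  [set x | forall phi, C phi -> 0 <= phi x].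

Definition equi_gateaux (C : set (E -> R)) (x : E) : Prop :=
  (forall phi, C phi -> gateaux_differentiable phi x) /\
  forall v : E, forall eps : R, 0 < eps -> exists2 delta : R, 0 < delta &
    forall t : R, 0 < t < delta -> forall phi L, C phi -> gateaux_at phi x L ->
      `|(phi (x + t *: v) - phi x - t * L v) / t| <= eps.

Definition equi_lsc (C : set (E -> R)) (x : E) : Prop :=
  forall eps : R, 0 < eps -> exists O : set E,
    [/\ open O, O x & forall y phi, O y -> C phi -> phi y - phi x > - eps].

Definition convex_fset (S : set (E -> R)) : Prop :=
  forall f g (t : R), S f -> S g -> 0 <= t <= 1 ->
    S (fun v => t * f v + (1 - t) * g v).

(* The weak-star closed convex hull of B (B a set of elements of E^* ):
   the weak-star topology on E^* is the topology induced by the pointwise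
   (product) topology {ptws E -> R}; the w*-closed convex hull of B in E^*
   is the set of elements of E^* lying in every pointwise-closed convex set
   of functions containing B. *)
Definition wstar_clconv (B : set (E -> R)) : set (E -> R) :=
  [set l | is_dual l /\
     forall S : set (E -> R), B `<=` S -> convex_fset S ->
       @closed {ptws E -> R} S -> S l].

Definition wstar_compact (K : set (E -> R)) : Prop :=
  K `<=` is_dual /\ @compact {ptws E -> R} K.

Definition grads (C : set (E -> R)) (x : E) : set (E -> R) :=
  [set L | exists2 phi, C phi & gateaux_at phi x L].

Definition weak_admissible (F : set E) (xh : E) (C : set (E -> R)) : Prop :=
  [/\ C !=set0,
      F = nonneg_set C,
      equi_gateaux C xh,
      (let C' := [set phi | C phi /\ phi xh != 0] in C' = set0 \/ equi_lsc C' xh)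
    & wstar_compact (wstar_clconv (grads C xh))].

Definition tangent_dual (C : set (E -> R)) (xh : E) : set (E -> R) :=
  \bigcap_(n in [set n : nat | (1 <= n)%N])
    wstar_clconv [set L | exists2 phi, C phi /\ 0 <= phi xh <= n%:R^-1
                                     & gateaux_at phi xh L].

End Defs.

From HB Require Import structures.
From mathcomp Require Import all_boot all_order all_algebra.
From mathcomp Require Import all_classical all_reals all_analysis.
From mathcomp Require Import ring lra.
Import Order.TTheory GRing.Theory Num.Theory.
Import numFieldNormedType.Exports.
Local Open Scope classical_set_scope.
Local Open Scope ring_scope.

(* If x^ is interior, one-sided Gateaux derivatives of f at the local maximum
   are <= 0 in every direction, so d_G f(x^) = 0.  Otherwise assume there are no
   multipliers.  Then d_G f(x^) <> 0 and no element of the w*-compact convex set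
   T_C(x^) is a nonpositive multiple of d_G f(x^), so each l in T_C(x^) is
   positive at some v with d_G f(x^) v > 0.  A finite subcover and a planar
   minimax argument, applied one direction at a time, give a single such w with
   l w > 0 on all of T_C(x^); by compactness again, L w > 1/n for every
   derivative L of a constraint phi with phi(x^) in [0, 1/n].  Equi-Gateaux
   differentiability keeps these nearly active constraints nonnegative along
   x^ + t w for small t > 0, equi-lower semicontinuity keeps the other ones
   nonnegative, so x^ + t w is feasible and d_G f(x^) w <= 0: a contradiction.
   When 0 is not in T_C(x^) the multiplier of f cannot vanish, and dividing by
   it normalizes it to 1. *)

Lemma compact_decreasing_cluster {T : topologicalType} {K : set T}
    {S : nat -> set T} :
  compact K -> (forall n, S n `<=` K) -> (forall n, S n.+1 `<=` S n) ->
  (forall n, S n !=set0) -> exists2 p, K p & forall n, closure (S n) p.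
Proof.
move=> cK SK Sdec Sne.
have SleS m n : (m <= n)%N -> S n `<=` S m.
  move=> /subnK <-; elim: (n - m)%N => //= k IH.
  by rewrite addSn; exact: subset_trans (Sdec _) IH.
have Sfilter : ProperFilter (filter_from setT S).
  apply: filter_from_proper => [|n _]; last exact: Sne.
  apply: filter_fromT_filter => [|m n]; first by exists 0%N.
  exists (maxn m n) => x Sx.
  by split; apply: SleS Sx; rewrite ?leq_maxl ?leq_maxr.
have [|p [Kp clp]] := cK _ Sfilter; first by exists 0%N.
by exists p => // n B nB; apply: clp nB; exists n.
Qed.

Lemma compact_seq_subcover (T : topologicalType) (I : eqType) (K : set T)
    (D : set I) (f : I -> set T) :
  compact K -> (forall i, D i -> open (f i)) -> K `<=` \bigcup_(i in D) f i ->
  exists2 s : seq I, {subset s <= D} & K `<=` \bigcup_(i in [set` s]) f i.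
Proof.
move=> cK fopen Kcov; apply: contrapT => nocover.
pose B (s : seq I) := [set x | K x /\ forall i, i \in s -> ~ f i x].
have Bfilter : ProperFilter (filter_from [set s : seq I | {subset s <= D}] B).
  apply: filter_from_proper => [|s sD]; last first.
    apply: contrapT => Bs0; apply: nocover; exists s => // x Kx.
    apply: contrapT => sx; apply: Bs0; exists x; split => // i si fx.
    by apply: sx; exists i.
  apply: filter_from_filter => [|s1 s2 s1D s2D]; first by exists [::].
  exists (s1 ++ s2) => [i|x [Kx nf]].
    by rewrite mem_cat => /orP[/s1D|/s2D].
  by split; split => // i si; apply: nf; rewrite mem_cat si ?orbT.
have [|p [Kp clp]] := cK _ Bfilter; first by exists [::] => // x [].
have [i Di fip] := Kcov p Kp.
have [x [[_ nf] fx]] : B [:: i] `&` f i !=set0.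
  apply: clp.
    by exists [:: i] => // j; rewrite mem_seq1 => /eqP ->; exact/mem_set.
  by apply: open_nbhs_nbhs; split; [exact: fopen | exact: fip].
by apply: nf fx; rewrite mem_seq1.
Qed.

Section Pointwise.
Context {R : realType} {E : tvsType R}.
Local Notation PT := {ptws E -> R}.

Lemma ptws_closed_le (v : E) (c : R) : closed [set l : PT | l v <= c].
Proof.
apply: (@preimage_closed PT R (fun l : PT => l v) [set x | x <= c]).
  by move=> l _; exact: (@proj_continuous E (fun=> R) v).
exact: closed_le.
Qed.

Lemma ptws_open_gt (v : E) (c : R) : open [set l : PT | c < l v].
Proof.
apply: (@open_comp PT R (fun l : PT => l v) [set x | c < x]).
  by move=> l _; exact: (@proj_continuous E (fun=> R) v).
exact: open_gt.
Qed.

End Pointwise.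

Lemma near_ray {R : realType} {E : tvsType R} {U : set E} {x : E} (v : E) :
  nbhs x U -> \forall t \near (0 : R)^'+, U (x + t *: v).
Proof.
have scale : (fun t : R^o => t *: v) @ (0 : R^o) --> (0 : R^o) *: v.
  apply: (@continuous2_cvg _ _ _ _ _ _ _ _ (fun (a : R^o) (u : E) => a *: u)).
  - exact: (@scale_continuous R E ((0 : R^o), v)).
  - exact: cvg_id.
  - exact: cvg_cst.
have ray : (fun t : R^o => x + t *: v) @ (0 : R^o) --> x + (0 : R^o) *: v.
  apply: (@continuous2_cvg R^o E E E (nbhs (0 : R^o)) _ (fun=> x) _
    (fun u w : E => u + w) _ _ _ (cvg_cst x) scale).
  exact: (@add_continuous E (x, (0 : R^o) *: v)).
rewrite scale0r addr0 in ray.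
have ray_right : (fun t : R => x + t *: v) @ (0 : R)^'+ --> x.
  exact: cvg_within_filter ray.
exact: ray_right.
Qed.

Section LinearFunctionals.
Context {R : realType} {E : tvsType R}.
Implicit Types (l : E -> R) (u v : E).

Definition is_linear l := forall (a : R) u v, l (a *: u + v) = a * l u + l v.

Lemma is_linearZ {l} : is_linear l -> forall a u, l (a *: u) = a * l u.
Proof.
move=> ll a u.
have l0 : l 0 = 0 by have := ll 1 0 0; rewrite scale1r addr0; lra.
by have := ll a u 0; rewrite addr0 l0 addr0.
Qed.

Lemma is_linearD {l} : is_linear l -> forall u v, l (u + v) = l u + l v.
Proof. by move=> ll u v; have := ll 1 u v; rewrite scale1r mul1r. Qed.

Lemma is_linearN {l} : is_linear l -> forall v, l (- v) = - l v.
Proof. by move=> ll v; rewrite -scaleN1r (is_linearZ ll) mulN1r. Qed.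

Lemma dual_linear l : is_dual l -> is_linear l.
Proof. by case. Qed.

Lemma is_linear_proportional {D l : E -> R} {u} :
  is_linear D -> is_linear l -> D u = 1 -> (forall v, 0 < D v -> l v <= 0) ->
  forall v, l v = l u * D v.
Proof.
move=> lD ll Du l_le0.
have ker k : D k = 0 -> l k = 0.
  move=> Dk; apply: contrapT => /eqP lk.
  have := l_le0 (u + ((1 - l u) / l k) *: k).
  rewrite (is_linearD lD) (is_linearD ll) !(is_linearZ lD) (is_linearZ ll).
  rewrite Dk Du divfK // mulr0 addr0.
  by move=> /(_ ltr01); lra.
move=> v; have := ker (v - D v *: u).
rewrite (is_linearD lD) (is_linearD ll) (is_linearN lD) (is_linearN ll).
rewrite (is_linearZ lD) (is_linearZ ll) Du mulr1 subrr.
by move=> /(_ erefl); lra.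
Qed.

End LinearFunctionals.

Section Gateaux.
Context {R : realType} {E : tvsType R}.

Lemma gateaux_max_le0 (f : E -> R) (x v : E) (Df : E -> R) :
  gateaux_at f x Df -> (\forall t \near (0 : R)^'+, f (x + t *: v) <= f x) ->
  Df v <= 0.
Proof.
move=> [_ dfv] fmax; rewrite leNgt; apply/negP => Dv.
have small := cvgr0_norm_lt _ (dfv v) _ (divr_gt0 Dv (ltr0n _ 2)).
have : \forall t \near (0 : R)^'+, [/\ 0 < t, f (x + t *: v) <= f x &
    `|(f (x + t *: v) - f x - t * Df v) / t| < Df v / 2].
  near=> t; split.
  - by near: t; exact: nbhs_right_gt.
  - by near: t.
  - by near: t; exact: small.
move=> /filter_ex [t [t0 ft st]].
have : (f (x + t *: v) - f x - t * Df v) / t <= - Df v.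
  by rewrite ler_pdivrMr // mulNr (mulrC (Df v)); lra.
have := ler_norm (- ((f (x + t *: v) - f x - t * Df v) / t)).
by rewrite normrN; lra.
Unshelve. all: by end_near.
Qed.

Lemma gateaux_local_max_eq0 (U : set E) {f : E -> R} {x : E} {Df : E -> R} :
  nbhs x U -> (forall y, U y -> f y <= f x) -> gateaux_at f x Df ->
  forall v, Df v = 0.
Proof.
move=> Ux fmax gf.
have Dle0 v : Df v <= 0.
  by apply: gateaux_max_le0 gf _; apply: filterS (near_ray v Ux) => y /fmax.
have lD : is_linear Df by case: gf => /dual_linear.
by move=> v; have := Dle0 (- v); rewrite (is_linearN lD); have := Dle0 v; lra.
Qed.

End Gateaux.

Section PlanarSeparation.
Context {R : realType}.

Definition convex_pairs (P : set (R * R)) := forall p q (t : R),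
  P p -> P q -> 0 <= t <= 1 ->
  P (t * p.1 + (1 - t) * q.1, t * p.2 + (1 - t) * q.2).

(* Otherwise the point of the segment [p, q] with first coordinate m/2 would
   have second coordinate below m/2. *)
Lemma gap_slope {P : set (R * R)} {m : R} {p q} : 0 < m -> convex_pairs P ->
  (forall r, P r -> m <= r.1 \/ m <= r.2) ->
  P p -> P q -> p.2 < m / 2 -> q.1 < m / 2 ->
  (m / 2 - p.2) * (m / 2 - q.1) <= (p.1 - m / 2) * (q.2 - m / 2).
Proof.
move=> m_gt0 Pconv Pgap Pp Pq p2 q1; rewrite leNgt; apply/negP => steep.
have p1 : m <= p.1 by case: (Pgap _ Pp) => h //; lra.
have q2 : m <= q.2 by case: (Pgap _ Pq) => h //; lra.
pose t := (m / 2 - q.1) / (p.1 - q.1).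
have td : t * (p.1 - q.1) = m / 2 - q.1 by rewrite /t divfK //; lra.
have t01 : 0 <= t <= 1.
  by rewrite /t divr_ge0 ?ler_pdivrMr /=; lra.
have z1 : t * p.1 + (1 - t) * q.1 = m / 2 by lra.
have z2 : (t * p.2 + (1 - t) * q.2 - m / 2) * (p.1 - q.1) < 0 by nra.
have := Pgap _ (Pconv _ _ _ Pp Pq t01); rewrite /= z1.
by move: z2; rewrite pmulr_llt0; lra.
Qed.

Lemma gap_halfplane {P : set (R * R)} {m : R} : 0 < m -> convex_pairs P ->
  (forall p, P p -> m <= p.1 \/ m <= p.2) ->
  exists a : R, 0 <= a <= 1 /\ forall p, P p -> 0 < a * p.1 + (1 - a) * p.2.
Proof.
move=> m_gt0 Pconv Pgap.
have p1_ge p : P p -> p.2 < m / 2 -> m <= p.1.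
  by move=> /Pgap [] h p2 //; lra.
have q2_ge q : P q -> q.1 < m / 2 -> m <= q.2.
  by move=> /Pgap [] h q1 //; lra.
(* Points below the line y = m/2 bound a from below, points left of x = m/2
   bound it from above, and gap_slope says the two families of bounds are
   compatible: take a to be the largest lower bound. *)
pose S := [set a : R | a = 0 \/
  exists2 p, P p /\ p.2 < m / 2 & a = (m / 2 - p.2) / (p.1 - p.2)].
have S_ub : ubound S 1.
  move=> _ [->|[p [Pp p2] ->]] //.
  by have p1 := p1_ge p Pp p2; rewrite ler_pdivrMr; lra.
have S_ne0 : S !=set0 by exists 0; left.
have S_sup : has_sup S by split; last exists 1.
have a_ge0 : 0 <= sup S by apply: sup_upper_bound => //; left.
have below p : P p -> p.2 < m / 2 -> m / 2 - p.2 <= sup S * (p.1 - p.2).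
  move=> Pp p2; have := p1_ge p Pp p2 => p1.
  rewrite -ler_pdivrMr; last lra.
  by apply: sup_upper_bound => //; right; exists p.
have above q : P q -> q.1 < m / 2 -> sup S * (q.2 - q.1) <= q.2 - m / 2.
  move=> Pq q1; have := q2_ge q Pq q1 => q2.
  rewrite -ler_pdivlMr; last lra.
  apply: ge_sup => // _ [->|[p [Pp p2] ->]]; first by rewrite divr_ge0; lra.
  have := p1_ge p Pp p2 => p1.
  have := gap_slope m_gt0 Pconv Pgap Pp Pq p2 q1 => slope.
  rewrite ler_pdivrMr; last lra.
  rewrite mulrAC ler_pdivlMr; last lra.
  have -> : (m / 2 - p.2) * (q.2 - q.1) = (m / 2 - p.2) * (m / 2 - q.1)
    + (m / 2 - p.2) * (q.2 - m / 2) by ring.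
  have -> : (q.2 - m / 2) * (p.1 - p.2) = (p.1 - m / 2) * (q.2 - m / 2)
    + (m / 2 - p.2) * (q.2 - m / 2) by ring.
  by rewrite lerD2r.
exists (sup S); split; first by rewrite a_ge0 ge_sup.
move=> p Pp.
have [p2|p2] := ltP p.2 (m / 2); first by have := below p Pp p2; lra.
have [p1|p1] := ltP p.1 (m / 2); first by have := above p Pp p1; lra.
have a_le1 := ge_sup S_ne0 S_ub.
have : 0 <= sup S * (p.1 - m / 2) by apply: mulr_ge0; lra.
have : 0 <= (1 - sup S) * (p.2 - m / 2) by apply: mulr_ge0; lra.
lra.
Qed.

End PlanarSeparation.

Section PositiveDirections.
Context {R : realType} {E : tvsType R}.
Local Notation PT := {ptws E -> R}.

Lemma compact_convex_mix2_gt0 (K : set PT) (v1 v2 : E) :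
  compact K -> convex_fset K -> (forall l, K l -> 0 < l v1 \/ 0 < l v2) ->
  exists a : R, 0 <= a <= 1 /\ forall l, K l -> 0 < a * l v1 + (1 - a) * l v2.
Proof.
move=> cK Kconv Kpos.
have [[l0 Kl0]|K0] := pselect (K !=set0); last first.
  by exists 0; split => [|l Kl]; [rewrite lexx ler01 | case: K0; exists l].
have eval_cont v : continuous (fun l : PT => l v).
  exact: (@proj_continuous E (fun=> R) v).
have [c /set_mem Kc cmin] := @compact_EVT_min PT R
  ((fun l : PT => l v1) \max (fun l : PT => l v2)) K (ex_intro _ l0 Kl0) cK
  (continuous_subspaceT (max_fun_continuous (eval_cont v1) (eval_cont v2))).
pose m := Num.max (c v1) (c v2).
have m_gt0 : 0 < m by rewrite /m lt_max; case: (Kpos c Kc) => ->; rewrite ?orbT.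
pose P := [set (l v1, l v2) | l in K].
have Pconv : convex_pairs P.
  move=> _ _ t [l Kl <-] [l' Kl' <-] t01.
  by exists (fun v => t * l v + (1 - t) * l' v) => //; exact: Kconv.
have Pgap r : P r -> m <= r.1 \/ m <= r.2.
  move=> [l Kl <-] /=; have := cmin l (mem_set Kl).
  by rewrite /= le_max => /orP.
have [a [a01 Pa]] := gap_halfplane m_gt0 Pconv Pgap.
by exists a; split => // l Kl; apply: (Pa (l v1, l v2)); exists l.
Qed.

Lemma convex_fset_le (v : E) (c : R) : convex_fset [set l : E -> R | l v <= c].
Proof. by move=> f g t /= fv gv /andP [t0 t1]; nra. Qed.

Lemma convex_fsetI (A B : set (E -> R)) :
  convex_fset A -> convex_fset B -> convex_fset (A `&` B).
Proof.
by move=> cA cB f g t [Af Bf] [Ag Bg] t01; split; [apply: cA | apply: cB].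
Qed.

Lemma finite_cover_positive_direction (D : E -> R) (w0 : E) (s : seq E)
    (K : set PT) :
  is_linear D -> 0 < D w0 -> compact K -> convex_fset K ->
  (forall l, K l -> is_linear l) -> (forall v, v \in s -> 0 < D v) ->
  (forall l, K l -> exists2 v, v \in s & 0 < l v) ->
  exists2 w, 0 < D w & forall l, K l -> 0 < l w.
Proof.
move=> lD Dw0; elim: s K => [|v s IH] K cK Kconv Klin Ds Kcov.
  by exists w0 => // l /Kcov [].
(* By induction a direction w' serves the functionals of K not positive at v;
   a planar mix of v and w' then serves all of K. *)
pose Kv := K `&` [set l : PT | l v <= 0].
have [w' Dw' Kvw'] : exists2 w', 0 < D w' & forall l, Kv l -> 0 < l w'.
  apply: IH => [||l [/Klin]//|u us|l [Kl lv]].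
  - by apply: compact_closedI => //; exact: ptws_closed_le.
  - exact: convex_fsetI Kconv (convex_fset_le v 0).
  - by apply: Ds; rewrite in_cons us orbT.
  - have [u] := Kcov l Kl; rewrite in_cons => /orP [/eqP ->|us] lu.
      by rewrite /= in lv; lra.
    by exists u.
have [a [/andP [a0 a1] Ka]] : exists a : R, 0 <= a <= 1 /\
    forall l, K l -> 0 < a * l v + (1 - a) * l w'.
  apply: compact_convex_mix2_gt0 => // l Kl.
  by have [lv|lv] := leP (l v) 0; [right; apply: Kvw' | left].
have Dv : 0 < D v by apply: Ds; rewrite in_cons eqxx.
exists (a *: v + (1 - a) *: w').
  rewrite (is_linearD lD) !(is_linearZ lD).
  have [->|a_neq0] := eqVneq a 0; first by rewrite mul0r add0r subr0 mul1r.
  have : 0 < a * D v by rewrite mulr_gt0 // lt_neqAle eq_sym a_neq0.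
  have : 0 <= (1 - a) * D w' by rewrite mulr_ge0 ?subr_ge0 // ltW.
  lra.
move=> l /[dup] Kl /Klin ll.
by rewrite (is_linearD ll) !(is_linearZ ll); exact: Ka.
Qed.

Lemma compact_convex_positive_direction {D : E -> R} {w0 : E} {K : set PT} :
  is_linear D -> 0 < D w0 -> compact K -> convex_fset K ->
  (forall l, K l -> is_linear l) ->
  (forall l, K l -> exists2 v, 0 < D v & 0 < l v) ->
  exists2 w, 0 < D w & forall l, K l -> 0 < l w.
Proof.
move=> lD Dw0 cK Kconv Klin Kcov.
have [s sD Ks] : exists2 s : seq E, {subset s <= [set v | 0 < D v]} &
    K `<=` \bigcup_(v in [set` s]) [set l : PT | 0 < l v].
  apply: compact_seq_subcover cK _ _ => [v _|l /Kcov [v Dv lv]].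
    exact: ptws_open_gt.
  by exists v.
apply: (@finite_cover_positive_direction D w0 s K lD Dw0 cK Kconv Klin).
  by move=> v /sD /set_mem.
by move=> l /Ks [v sv lv]; exists v.
Qed.

End PositiveDirections.

Section WeakStarHull.
Context {R : realType} {E : tvsType R}.
Local Notation PT := {ptws E -> R}.

Lemma is_dual_convex (f g : E -> R) (t : R) : is_dual f -> is_dual g ->
  is_dual (fun v => t * f v + (1 - t) * g v).
Proof.
move=> [lf cf] [lg cg]; split=> [a u v|x]; first by rewrite lf lg; ring.
apply: (@continuousD _ _ _ (fun v => t * f v) (fun v => (1 - t) * g v)).
  by apply: (@continuousM _ _ (fun=> t) f); [exact: cst_continuous | exact: cf].
apply: (@continuousM _ _ (fun=> 1 - t) g); first exact: cst_continuous.
exact: cg.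
Qed.

Lemma wstar_clconvS (A B : set (E -> R)) :
  A `<=` B -> wstar_clconv A `<=` wstar_clconv B.
Proof.
by move=> AB l [dl Al]; split=> // S BS; apply: Al; exact: subset_trans BS.
Qed.

Lemma wstar_clconv_closure (B : set (E -> R)) (l : E -> R) :
  is_dual l -> closure (B : set PT) l -> wstar_clconv B l.
Proof.
move=> dl Bl; split=> // S BS _ Sclosed.
by apply: Sclosed; exact: (@closureS PT _ _ BS l Bl).
Qed.

Definition ptws_clconv (B : set (E -> R)) : set PT :=
  [set l | forall S : set PT, B `<=` S -> convex_fset S -> closed S -> S l].

Lemma ptws_clconv_closed (B : set (E -> R)) : closed (ptws_clconv B).
Proof.
move=> l Bl S BS Sconv Sclosed; apply: (Sclosed).
by apply: closureS Bl => l' Bl'; exact: Bl' S BS Sconv Sclosed.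
Qed.

End WeakStarHull.

Definition active_grads {R : realType} {E : tvsType R} (C : set (E -> R))
    (xh : E) (n : nat) : set (E -> R) :=
  [set L | exists2 phi, C phi /\ 0 <= phi xh <= n%:R^-1 & gateaux_at phi xh L].

Section TangentDual.
Context {R : realType} {E : tvsType R}.
Local Notation PT := {ptws E -> R}.
Context {C : set (E -> R)} {xh : E}.

Lemma active_grads_le {m n} : (0 < m)%N -> (m <= n)%N ->
  active_grads C xh n `<=` active_grads C xh m.
Proof.
move=> m_gt0 mn L [phi [Cphi /andP [phi_ge0 phi_le]] dphi].
exists phi => //; split => //; rewrite phi_ge0 (le_trans phi_le) //.
by rewrite lef_pV2 ?posrE ?ltr0n ?ler_nat // (leq_trans m_gt0).
Qed.

Lemma active_grads_sub n : active_grads C xh n `<=` grads C xh.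
Proof. by move=> L [phi [Cphi _] dphi]; exists phi. Qed.

Lemma tangent_dual_linear {l : E -> R} : tangent_dual C xh l -> is_linear l.
Proof. by move=> /(_ 1%N isT) [/dual_linear]. Qed.

Lemma tangent_dual_convex : convex_fset (tangent_dual C xh).
Proof.
move=> f g t Tf Tg t01 n n_ge1; have [df Hf] := Tf n n_ge1.
have [dg Hg] := Tg n n_ge1; split; first exact: is_dual_convex.
move=> S BS Sconv Sclosed.
by apply: (Sconv) t01; [exact: Hf | exact: Hg].
Qed.

Hypothesis hull_compact : wstar_compact (wstar_clconv (grads C xh)).

Lemma tangent_dual_compact : @compact PT (tangent_dual C xh).
Proof.
have [K_dual K_compact] := hull_compact.
suff -> : tangent_dual C xh = wstar_clconv (grads C xh) `&`
    \bigcap_(n in [set n | (1 <= n)%N]) ptws_clconv (active_grads C xh n).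
  apply: compact_closedI => //; apply: closed_bigI => n _.
  exact: ptws_clconv_closed.
apply/seteqP; split=> [l Tl|l [/K_dual dl Tl] n n_ge1]; last first.
  by split=> //; exact: Tl.
split=> [|n n_ge1]; last exact: (Tl n n_ge1).2.
exact: wstar_clconvS (@active_grads_sub 1%N) _ (Tl 1%N isT).
Qed.

Lemma tangent_dual_cluster (A : nat -> set (E -> R)) :
  (forall n, A n `<=` active_grads C xh n.+1) -> (forall n, A n.+1 `<=` A n) ->
  (forall n, A n !=set0) ->
  exists2 l, tangent_dual C xh l & forall n, wstar_clconv (A n) l.
Proof.
move=> A_active A_decr A_ne0; have [K_dual K_compact] := hull_compact.
have A_hull n : A n `<=` wstar_clconv (grads C xh).
  move=> L /A_active /active_grads_sub gL; split; first by case: gL => ? _ [].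
  by move=> S gS _ _; exact: gS.
have [l Kl l_cl] := compact_decreasing_cluster K_compact A_hull A_decr A_ne0.
have Al n : wstar_clconv (A n) l.
  by apply: wstar_clconv_closure; [exact: K_dual|].
exists l => // n n_ge1; rewrite -(prednK n_ge1).
exact: wstar_clconvS (A_active _) _ (Al n.-1).
Qed.

Lemma tangent_dual_neq0 : (forall n, active_grads C xh n.+1 !=set0) ->
  tangent_dual C xh !=set0.
Proof.
move=> active_ne0.
have [l Tl _] := tangent_dual_cluster (fun n => active_grads C xh n.+1)
  (fun n => @subset_refl _ (active_grads C xh n.+1))
  (fun n => active_grads_le (ltn0Sn n) (leqnSn n.+1)) active_ne0.
by exists l.
Qed.

Lemma tangent_dual_uniform_pos {w : E} :
  (forall l, tangent_dual C xh l -> 0 < l w) ->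
  exists n, forall L, active_grads C xh n.+1 L -> n.+1%:R^-1 < L w.
Proof.
move=> Tw; apply: contrapT => no_bound.
pose A n := active_grads C xh n.+1 `&` [set L | L w <= n.+1%:R^-1].
have A_ne0 n : A n !=set0.
  apply: contrapT => A0; apply: no_bound; exists n => L L_active.
  by rewrite ltNge; apply/negP => Lw; apply: A0; exists L.
have A_decr n : A n.+1 `<=` A n.
  move=> L [L_active Lw]; split.
    exact: active_grads_le (ltn0Sn n) (leqnSn n.+1) _ L_active.
  by rewrite /= (le_trans Lw) // lef_pV2 ?posrE ?ltr0n ?ler_nat.
have [l Tl Al] := tangent_dual_cluster A (fun n L => @proj1 _ _) A_decr A_ne0.
have lw_le n : l w <= n.+1%:R^-1.
  have [_ hull] := Al n; apply: (hull [set L : E -> R | L w <= n.+1%:R^-1]).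
  - by move=> L [].
  - exact: convex_fset_le.
  - exact: ptws_closed_le.
have /ltr_add_invr [n] := Tw l Tl; rewrite add0r.
by rewrite ltNge lw_le.
Qed.

End TangentDual.

Section Constraints.
Context {R : realType} {E : tvsType R}.
Context {C : set (E -> R)} {xh : E}.
Hypothesis xh_feasible : nonneg_set C xh.
Hypothesis inactive_lsc : let C' := [set phi | C phi /\ phi xh != 0] in
  C' = set0 \/ equi_lsc C' xh.

Lemma inactive_constraints_near {q : R} : 0 < q ->
  \forall y \near xh, forall phi, C phi -> q < phi xh -> 0 <= phi y.
Proof.
move=> q_gt0; have inactive phi : C phi -> q < phi xh -> C phi /\ phi xh != 0.
  by move=> Cphi phi_gt; split; rewrite // gt_eqF // (lt_trans q_gt0).
case: inactive_lsc => [C'0|lsc].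
  apply: nearW => y phi Cphi /(inactive _ Cphi) C'phi.
  by move: C'phi; rewrite -[_ /\ _]/([set phi | C phi /\ phi xh != 0] phi) C'0.
have [U [U_open U_xh U_lsc]] := lsc q q_gt0.
apply: filterS (open_nbhs_nbhs (conj U_open U_xh)) => y Uy phi Cphi phi_gt.
by have := U_lsc y phi Uy (inactive _ Cphi phi_gt); lra.
Qed.

Lemma active_grads_neq0 :
  (forall phi, C phi -> gateaux_differentiable phi xh) ->
  ~ interior (nonneg_set C) xh -> forall n, active_grads C xh n.+1 !=set0.
Proof.
move=> C_diff not_interior n; apply: contrapT => active0; apply: not_interior.
rewrite /interior /=.
have inv_gt0 : 0 < n.+1%:R^-1 :> R by rewrite invr_gt0 ltr0Sn.
apply: filterS (inactive_constraints_near inv_gt0) => y inactive_y phi Cphi.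
apply: inactive_y => //; rewrite ltNge; apply/negP => phi_le.
have [L dphi] := C_diff phi Cphi; apply: active0; exists L, phi => //.
by rewrite phi_le xh_feasible.
Qed.

Lemma feasible_direction {w : E} {n : nat} : equi_gateaux C xh ->
  (forall L, active_grads C xh n.+1 L -> n.+1%:R^-1 < L w) ->
  \forall t \near (0 : R)^'+, nonneg_set C (xh + t *: w).
Proof.
move=> [C_diff C_equi] active_w; set q : R := n.+1%:R^-1.
have q_gt0 : 0 < q by rewrite invr_gt0 ltr0Sn.
have [del del_gt0 C_del] := C_equi w (q / 2) (divr_gt0 q_gt0 (ltr0n _ 2)).
have inactive_w := near_ray w (inactive_constraints_near q_gt0).
near=> t.
have t_range : 0 < t < del.
  by apply/andP; split; near: t; [exact: nbhs_right_gt | exact: nbhs_right_lt].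
have inactive_t : forall phi, C phi -> q < phi xh -> 0 <= phi (xh + t *: w).
  by near: t.
move=> phi Cphi.
have [phi_le|phi_gt] := leP (phi xh) q; last exact: inactive_t.
have [L dphi] := C_diff phi Cphi.
have Lw : q < L w.
  by apply: active_w; exists phi => //; rewrite phi_le xh_feasible.
have t_gt0 : 0 < t by case/andP: t_range.
have := C_del t t_range phi L Cphi dphi.
set r := phi (xh + t *: w) - phi xh - t * L w => r_small.
have : - (q / 2) * t <= r.
  have := ler_norm (- (r / t)); rewrite normrN => /le_trans/(_ r_small).
  by rewrite lerNl ler_pdivlMr.
have : q / 2 * t <= L w * t - q / 2 * t by rewrite -mulrBl ler_pM2r //; lra.
have := mulr_gt0 q_gt0 t_gt0; have := xh_feasible _ Cphi; rewrite /r; lra.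
Unshelve. all: by end_near.
Qed.

End Constraints.

Section Multipliers.
Context {R : realType} {E : tvsType R}.

Lemma linear_ascent_alternative {D l : E -> R} {w0 : E} :
  is_linear D -> is_linear l -> 0 < D w0 ->
  (exists2 v, 0 < D v & 0 < l v) \/
  exists2 c, 0 <= c & forall v, c * D v + l v = 0.
Proof.
move=> lD ll Dw0.
have [ascent|no_ascent] := pselect (exists2 v, 0 < D v & 0 < l v).
  by left.
right.
pose u := (D w0)^-1 *: w0.
have Du : D u = 1 by rewrite (is_linearZ lD) mulVf // gt_eqF.
have l_le0 v : 0 < D v -> l v <= 0.
  by move=> Dv; rewrite leNgt; apply/negP => lv; apply: no_ascent; exists v.
exists (- l u); first by rewrite oppr_ge0 l_le0 // Du.
by move=> v; rewrite (is_linear_proportional lD ll Du l_le0 v); ring.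
Qed.

Lemma fritz_john {Omega : set E} {f : E -> R} {C : set (E -> R)} {xh : E}
    {Df : E -> R} :
  open Omega -> Omega xh -> nonneg_set C xh ->
  (forall x, Omega x -> nonneg_set C x -> f x <= f xh) ->
  gateaux_at f xh Df -> equi_gateaux C xh ->
  (let C' := [set phi | C phi /\ phi xh != 0] in C' = set0 \/ equi_lsc C' xh) ->
  wstar_compact (wstar_clconv (grads C xh)) ->
  ~ interior (nonneg_set C) xh ->
  exists (lam beta : R) (xs : E -> R),
    [/\ 0 <= lam, 0 <= beta, tangent_dual C xh xs, (lam, beta) != (0, 0) &
        forall v, lam * Df v + beta * xs v = 0].
Proof.
move=> Omega_open Omega_xh xh_feasible fmax df C_equi C_lsc hull_compact
  not_interior.
have lD : is_linear Df by case: df => /dual_linear.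
have active_ne0 := active_grads_neq0 xh_feasible C_lsc C_equi.1 not_interior.
apply: contrapT => no_multipliers.
have [w0 Dw0] : exists w0, 0 < Df w0.
  apply: contrapT => Df_le0; apply: no_multipliers.
  have [l0 Tl0] := tangent_dual_neq0 hull_compact active_ne0.
  exists 1, 0, l0; split => //; first by rewrite xpair_eqE oner_eq0.
  have Dle0 v : Df v <= 0.
    by rewrite leNgt; apply/negP => Dv; apply: Df_le0; exists v.
  by move=> v; have := Dle0 (- v); rewrite (is_linearN lD); have := Dle0 v; lra.
have ascent l : tangent_dual C xh l -> exists2 v, 0 < Df v & 0 < l v.
  move=> Tl; have [//|[c c_ge0 c_mult]] :=
    linear_ascent_alternative lD (tangent_dual_linear Tl) Dw0.
  case: no_multipliers; exists c, 1, l; split => //.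
    by rewrite xpair_eqE oner_eq0 andbF.
  by move=> v; rewrite mul1r c_mult.
have [w Dw Tw] := compact_convex_positive_direction lD Dw0
  (tangent_dual_compact hull_compact) tangent_dual_convex
  (fun l Tl => tangent_dual_linear Tl) ascent.
have [n active_w] := tangent_dual_uniform_pos hull_compact Tw.
suff : Df w <= 0 by lra.
apply: gateaux_max_le0 df _; near=> t; apply: fmax.
- by near: t; apply: near_ray; exact: open_nbhs_nbhs.
- by near: t; apply: (feasible_direction xh_feasible C_lsc C_equi active_w).
Unshelve. all: by end_near.
Qed.

Lemma multiplier_normalize (D : E -> R) (T : set (E -> R)) :
  ~ T (fun=> 0) ->
  (exists (lam beta : R) (xs : E -> R),
    [/\ 0 <= lam, 0 <= beta, T xs, (lam, beta) != (0, 0) &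
        forall v, lam * D v + beta * xs v = 0]) ->
  exists (beta : R) (xs : E -> R),
    [/\ 0 <= beta, T xs & forall v, D v + beta * xs v = 0].
Proof.
move=> T0 [lam [beta [xs [lam_ge0 beta_ge0 Txs lam_beta mult]]]].
have lam_gt0 : 0 < lam.
  rewrite lt_neqAle lam_ge0 andbT; apply/negP => /eqP lam0; apply: T0.
  have beta_neq0 : beta != 0 by move: lam_beta; rewrite -lam0 xpair_eqE eqxx.
  suff -> : (fun=> 0) = xs by [].
  apply: funext => v; have /eqP := mult v.
  by rewrite -lam0 mul0r add0r mulf_eq0 (negbTE beta_neq0) => /eqP.
exists (beta / lam), xs; split => //; first by rewrite divr_ge0.
move=> v; have -> : D v + beta / lam * xs v = (lam * D v + beta * xs v) / lam.
  by field; rewrite gt_eqF.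
by rewrite mult mul0r.
Qed.

End Multipliers.

Theorem theorem4p2 (R : realType) (E : tvsType R) (hE : hausdorff_space E)
  (Omega F : set E) (f : E -> R) (C : set (E -> R)) (xh : E) (Df : E -> R) :
  open Omega -> Omega !=set0 -> F !=set0 ->
  Omega xh -> F xh ->
  (forall x, Omega x -> F x -> f x <= f xh) ->
  gateaux_at f xh Df ->
  weak_admissible F xh C ->
  ((interior F) xh -> forall v, Df v = 0) /\
  (~ (interior F) xh ->
     (exists (lam beta : R) (xs : E -> R),
        [/\ 0 <= lam, 0 <= beta, tangent_dual C xh xs,
            (lam, beta) != (0, 0) &
            forall v, lam * Df v + beta * xs v = 0]) /\
     (~ tangent_dual C xh (fun _ => 0) ->
        exists (beta : R) (xs : E -> R),
          [/\ 0 <= beta, tangent_dual C xh xs &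
              forall v, Df v + beta * xs v = 0])).
Proof.
move=> Omega_open _ _ Omega_xh F_xh fmax df [_ FC C_equi C_lsc hull_compact].
split=> [F_interior|not_interior].
  apply: (gateaux_local_max_eq0 (Omega `&` F)) df => [|y [Oy Fy]].
    exact: filterI (open_nbhs_nbhs (conj Omega_open Omega_xh)) F_interior.
  exact: fmax.
rewrite FC in F_xh fmax not_interior.
have multipliers := fritz_john Omega_open Omega_xh F_xh fmax df C_equi C_lsc
  hull_compact not_interior.
by split=> // T0; exact: multiplier_normalize T0 multipliers.
Qed.
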